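(* Let $1/q$ be a prime power, $\Bbbk=\mathbb{F}_{1/q}$, $\alpha=(\alpha_1,\dots,\alpha_k),\beta$ weak compositions of $n$, and $M\in\mathbb{N}^{k\times l}$ with row sums $\alpha$ and column sums $\beta$. Let $E\in\mathrm{Fl}_\alpha$ be the standard flag. Then the number of $F'\in\mathrm{Fl}_\beta$ such that $(E,F')$ has relative position $M$ is $$q^{-\sum_{1\le i'\le i\le k,\,1\le j<j'\le l}M_{i,j}M_{i',j'}}\frac{\prod_{i=1}^k[\alpha_i]_q!}{\prod_{i,j}[M_{i,j}]_q!}.$$
   Context: $\mathrm{Fl}_\alpha$ is the set of chains $0=F_0\subseteq\cdots\subseteq F_k=\Bbbk^n$ with $\dim F_i=\alpha_1+\cdots+\alpha_i$; $E_i=\langle e_1,\dots,e_{\alpha_1+\cdots+\alpha_i}\rangle$. For $F\in\mathrm{Fl}_\alpha$, $F'\in\mathrm{Fl}_\beta$, the relative position of $(F,F')$ is the unique $M\in\mathbb{N}^{k\times l}$ with $\dim(F_i\cap F'_j)=\sum_{i'\le i,j'\le j}M_{i',j'}$ for all $0\le i\le k$, $0\le j\le l$. $[m]_q!=\prod_{r=1}^m(1+q+\cdots+q^{r-1})$. Note the index set in the exponent allows $i'=i$. *)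

From HB Require Import structures.
From mathcomp Require Import all_boot all_order all_algebra all_field.
Set Implicit Arguments. Unset Strict Implicit. Unset Printing Implicit Defensive.
Import GRing.Theory Num.Theory.
Local Open Scope ring_scope.

(* partial sums a_1 + ... + a_i (0-based: sum over i' < i) *)
Definition psum (k : nat) (a : 'I_k -> nat) (i : nat) : nat :=
  (\sum_(i' < k | (i' < i)%N) a i')%N.

Definition qfact (R : comNzRingType) (q : R) (m : nat) : R :=
  \prod_(1 <= r < m.+1) \sum_(s < r) q ^+ s.

(* Subspaces of k^n are represented canonically by matrices A with <<A>> = A
   (row space).  A flag of type b is a chain F_0 <= ... <= F_l of such
   subspaces with dim F_j = b_1 + ... + b_j. *)
Definition is_flag (F : finFieldType) (n l : nat) (b : 'I_l -> nat)
  (Fl : {ffun 'I_l.+1 -> 'M[F]_n}) : bool :=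
  [forall j : 'I_l.+1, ((<<Fl j>>)%MS == Fl j) && (\rank (Fl j) == psum b j)]
  && [forall j : 'I_l, (Fl (inord j) <= Fl (inord j.+1))%MS].

Definition std_flag (F : finFieldType) (n k : nat) (a : 'I_k -> nat)
  (i : 'I_k.+1) : 'M[F]_n := pid_mx (psum a i).

Definition has_relpos (F : finFieldType) (n k l : nat)
  (E : 'I_k.+1 -> 'M[F]_n) (Fl : {ffun 'I_l.+1 -> 'M[F]_n})
  (M : 'M[nat]_(k, l)) : bool :=
  [forall i : 'I_k.+1, forall j : 'I_l.+1,
     \rank (E i :&: Fl j)%MS ==
     (\sum_(i' < k | (i' < i)%N) \sum_(j' < l | (j' < j)%N) M i' j')%N].

From HB Require Import structures.
From mathcomp Require Import all_boot all_order all_algebra all_field.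
From mathcomp Require Import zify ring.
Set Implicit Arguments. Unset Strict Implicit. Unset Printing Implicit Defensive.
Import Order.TTheory GRing.Theory Num.Theory.
Local Open Scope ring_scope.

(* Induction on the number of blocks of F'.  If F' has relative position M
   with E, its penultimate member V meets each E_i in the dimension prescribed
   by M minus its last column M', i.e. V lies in a Schubert cell of E; and the
   rest of F' is any flag of V in relative position M' with the induced flag
   E_i :&: V.  So the count is (size of the cell) x (count for M').
   The cell is counted one step of E at a time: the subspaces V of E_(i+1)
   with V :&: E_i = V' and dim V = dim V' + r are spanned, over V', by the
   r-tuples of vectors of E_(i+1) independent modulo E_i, each V by as many
   tuples as V has tuples independent modulo V'.  Both tuple counts are
   products of terms Q^w - Q^(e+t), and their quotient is exactly the factor
   by which the closed formula changes when the last column of M is removed. *)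

Lemma psumS k (a : 'I_k -> nat) (i : 'I_k) : psum a i.+1 = (psum a i + a i)%N.
Proof.
rewrite /psum (bigD1 i) ?ltnSn //= addnC; congr (_ + _)%N.
by apply: eq_bigl => i'; rewrite ltnS ltn_neqAle andbC.
Qed.

Definition relpos_exponent k l (f : 'I_k -> 'I_l -> nat) : nat :=
  (\sum_(i < k) \sum_(i' < k | (i' <= i)%N)
     \sum_(j < l) \sum_(j' < l | (j < j')%N) f i j * f i' j')%N.

Lemma eq_relpos_exponent k l (f g : 'I_k -> 'I_l -> nat) : f =2 g ->
  relpos_exponent f = relpos_exponent g.
Proof.
move=> fg; apply: eq_bigr => i _; apply: eq_bigr => i' _; apply: eq_bigr => j _.
by apply: eq_bigr => j' _; rewrite !fg.
Qed.

Lemma relpos_exponent_recr k l (f : 'I_k -> 'I_l.+1 -> nat) :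
  let f' i j := f i (widen_ord (leqnSn l) j) in
  relpos_exponent f = (relpos_exponent f' +
    \sum_(i < k) (\sum_(j < l) f' i j) * psum (f^~ ord_max) i.+1)%N.
Proof.
move=> f'; rewrite /relpos_exponent -big_split /=; apply: eq_bigr => i _.
rewrite big_distrr /= -big_split /=; apply: eq_bigr => i' _.
rewrite big_ord_recr /= [X in (_ + X)%N]big_pred0 => [|j']; last first.
  by rewrite ltnNge -ltnS ltn_ord.
rewrite addn0 big_distrl /= -big_split /=; apply: eq_bigr => j _.
by rewrite [in LHS]big_mkcond big_ord_recr /= -big_mkcond /= ltn_ord.
Qed.

Definition dropcol k l (M : 'M[nat]_(k, l.+1)) : 'M[nat]_(k, l) :=
  \matrix_(i, j) M i (widen_ord (leqnSn l) j).

Definition rowsum k l (M : 'M[nat]_(k, l)) (i : 'I_k) : nat := (\sum_(j < l) M i j)%N.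

Section QFactorial.
Variable R : comNzRingType.

Definition qpoch (x : R) m := \prod_(1 <= s < m.+1) (1 - x ^+ s).

Lemma qfact_qpoch (x : R) m : qfact x m * (1 - x) ^+ m = qpoch x m.
Proof.
elim: m => [|m IH]; first by rewrite /qfact /qpoch !big_geq // mulr1.
rewrite /qfact /qpoch big_nat_recr //= [in RHS]big_nat_recr //=.
rewrite -/(qfact x m) -/(qpoch x m) -IH.
by rewrite exprS -[1 - x ^+ m.+1]opprB subrX1 -[1 - x]opprB; ring.
Qed.

End QFactorial.

Lemma qfact_gt0 (R : numDomainType) (x : R) m : 0 <= x -> 0 < qfact x m.
Proof.
move=> x_ge0; rewrite /qfact big_nat_cond; apply: prodr_gt0 => r /andP [/andP [r_gt0 _] _].
rewrite -(prednK r_gt0) big_ord_recl expr0 ltr_pwDl ?sumr_ge0 // => i _.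
exact: exprn_ge0.
Qed.

Section SubspaceCounting.
Variables (F : finFieldType) (n : nat).
Local Notation Q := (#|F|%:R : rat).

Lemma card_rows_sub (A : 'M[F]_n) :
  #|[pred v : 'rV[F]_n | (v <= A)%MS]| = (#|F| ^ \rank A)%N.
Proof.
transitivity #|[set u *m row_base A | u in 'rV[F]_(\rank A)]|.
  apply: eq_card => v; rewrite inE; apply/idP/imsetP.
    by rewrite -(eq_row_base A) => /submxP [u ->]; exists u.
  by move=> [u _ ->]; rewrite (submx_trans (submxMl u _)) ?eq_row_base.
rewrite card_imset ?card_mx ?mul1n ?card_ord //.
have [B AB1] := row_freeP (row_base_free A); apply: can_inj (mulmx^~ B) _ => v.
by rewrite -mulmxA AB1 mulmx1.
Qed.

Lemma card_rows_subD (A B : 'M[F]_n) : (B <= A)%MS ->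
  #|[pred v : 'rV[F]_n | (v <= A)%MS && ~~ (v <= B)%MS]| =
  (#|F| ^ \rank A - #|F| ^ \rank B)%N.
Proof.
move=> sBA; rewrite -!card_rows_sub.
rewrite -(cardID [pred v : 'rV[F]_n | (v <= B)%MS] [pred v | (v <= A)%MS]).
have -> : #|[predI [pred v : 'rV[F]_n | (v <= A)%MS] & [pred v | (v <= B)%MS]]|
        = #|[pred v : 'rV[F]_n | (v <= B)%MS]|.
  apply: eq_card => v; rewrite !inE andb_idl // => vB.
  exact: submx_trans vB sBA.
by rewrite addKn; apply: eq_card => v; rewrite !inE andbC.
Qed.

Lemma mxrank_adds_row (A : 'M[F]_n) (v : 'rV[F]_n) :
  \rank (A + v)%MS = (\rank A + ~~ (v <= A)%MS)%N.
Proof.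
have [vA|nvA] := boolP (v <= A)%MS.
  by rewrite addn0; apply/eqmx_rank/eqmxP/addsmx_idPl.
have [le_Av _] := mxrank_adds_leqif A v.
have lt_Av : (\rank A < \rank (A + v)%MS)%N.
  rewrite ltn_neqAle (mxrank_leqif_sup (addsmxSl A v)).2 mxrankS ?addsmxSl //.
  by rewrite andbT addsmx_sub negb_and nvA orbT.
have := rank_leq_row v; lia.
Qed.

Definition free_rows (E W : 'M[F]_n) r :=
  [pred X : 'M[F]_(r, n) | (X <= W)%MS && (\rank (E + X)%MS == \rank E + r)%N].

Lemma free_rows_col_mx (E W : 'M[F]_n) r (v : 'rV[F]_n) (Y : 'M[F]_(r, n)) :
  (col_mx v Y \in free_rows E W r.+1) =
  [&& Y \in free_rows E W r, (v <= W)%MS & ~~ (v <= E + Y)%MS].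
Proof.
rewrite !inE -[r.+1]/(1 + r)%N col_mx_sub.
have -> : \rank (E + col_mx v Y)%MS = \rank ((E + Y) + v)%MS.
  by rewrite -(adds_eqmx (eqmx_refl E) (addsmxE v Y)) (addsmxC v Y) addsmxA.
rewrite mxrank_adds_row.
have [le_EY _] := mxrank_adds_leqif E Y.
have := rank_leq_row Y.
by case: (v <= E + Y)%MS; case: (v <= W)%MS; case: (Y <= W)%MS => /= *; lia.
Qed.

Definition free_count (w e r : nat) : rat := \prod_(t < r) (Q ^+ w - Q ^+ (e + t)).

Lemma card_free_rows (E W : 'M[F]_n) r : (E <= W)%MS ->
  #|free_rows E W r|%:R = free_count (\rank W) (\rank E) r.
Proof.
move=> sEW; elim: r => [|r IH].
  rewrite /free_count big_ord0 (@eq_card1 _ (0 : 'M_(0, n))) // => X.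
  by rewrite !inE flatmx0 eqxx sub0mx addn0; apply/eqP/eqmx_rank/eqmxP/addsmx0.
rewrite /free_count big_ord_recr /= -/(free_count _ _ _) -IH -sum1_card.
rewrite (partition_big (@dsubmx F 1 r n) (free_rows E W r)) /=; last first.
  by move=> X; rewrite -{1}(vsubmxK X) free_rows_col_mx => /andP[].
have [le_rW|gt_rW] := leqP (\rank E + r) (\rank W); last first.
  have no_free : free_rows E W r =1 pred0.
    move=> Y; apply/negP => /andP [sYW /eqP rY].
    have : (\rank (E + Y)%MS <= \rank W)%N by rewrite mxrankS // addsmx_sub sEW.
    lia.
  by rewrite big_pred0 // eq_card0 // mul0r.
rewrite (eq_bigr (fun _ => (#|F| ^ \rank W - #|F| ^ (\rank E + r))%N)); last first.
  move=> Y freeY; have /andP [sYW /eqP rY] := freeY.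
  rewrite (reindex (fun v : 'rV[F]_n => col_mx v Y)) /=; last first.
    exists usubmx => [v _ | X /andP [_ /eqP <-]]; first by rewrite col_mxKu.
    by rewrite vsubmxK.
  rewrite sum1_card -rY -card_rows_subD ?addsmx_sub ?sEW //.
  apply: eq_card => v; have := free_rows_col_mx E W v Y.
  by rewrite unfold_in /= !inE col_mxKd eqxx andbT freeY => ->.
have F0 : (0 < #|F|)%N by apply: ltnW (card_finNzRing_gt1 _).
by rewrite sum_nat_const natrM natrB ?leq_pexp2l // !natrX.
Qed.

Lemma mxrank_adds_free_sub (E V : 'M[F]_n) r (X : 'M[F]_(r, n)) : (V <= E)%MS ->
  \rank (E + X)%MS = (\rank E + r)%N -> \rank (V + X)%MS = (\rank V + r)%N.
Proof.
move=> sVE rEX.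
have := mxrank_sum_cap V X; have := mxrank_sum_cap E X; have := rank_leq_row X.
have : (\rank (V :&: X)%MS <= \rank (E :&: X)%MS)%N by rewrite mxrankS ?capmxS.
lia.
Qed.

Definition extensions (V' E W : 'M[F]_n) r :=
  [pred V : 'M[F]_n | [&& <<V>>%MS == V, \rank V == (\rank V' + r)%N, (V' <= V)%MS,
      (V <= W)%MS & \rank (V :&: E)%MS == \rank V']].

Lemma card_extensions (V' E W : 'M[F]_n) r : (V' <= E)%MS -> (E <= W)%MS ->
  #|extensions V' E W r|%:R * free_count (\rank V' + r) (\rank V') r =
  free_count (\rank W) (\rank E) r.
Proof.
move=> sV'E sEW; have sV'W := submx_trans sV'E sEW.
apply/esym; rewrite -card_free_rows // -sum1_card.
rewrite (partition_big (fun X => <<(V' + X)%MS>>%MS) (extensions V' E W r)) /=.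
  rewrite natr_sum (eq_bigr (fun _ => free_count (\rank V' + r) (\rank V') r)).
    by rewrite sumr_const mulr_natl.
  move=> V /and5P [/eqP cV /eqP rV sV'V sVW /eqP rVE].
  rewrite sum1_card -rV -card_free_rows //; congr (_ %:R); apply: eq_card => X.
  rewrite !inE; apply/andP/andP => [[/andP [sXW /eqP rEX] /eqP <-] | [sXV /eqP rV'X]].
    by rewrite genmxE addsmxSr (mxrank_adds_free_sub sV'E rEX).
  have sV'XV : (V' + X <= V)%MS by rewrite addsmx_sub sV'V sXV.
  have eV'XV : (V' + X == V)%MS by rewrite -(mxrank_leqif_eq sV'XV).2 rV'X rV.
  have -> : <<(V' + X)%MS>>%MS = V by rewrite -cV; apply/eq_genmx/eqmxP.
  rewrite inE (submx_trans sXV sVW) eqxx; split=> //.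
  have rEX : \rank (E + X)%MS = \rank (E + V)%MS.
    apply/eqmx_rank/andP; split; first by rewrite addsmxS.
    have /andP [_ sVV'X] := eV'XV.
    by rewrite addsmx_sub addsmxSl (submx_trans sVV'X) // addsmxS.
  by have := mxrank_sum_cap E V; rewrite capmxC rVE rV rEX; lia.
move=> X /andP [sXW /eqP rEX]; have rV'X := mxrank_adds_free_sub sV'E rEX.
rewrite genmx_id eqxx mxrank_gen rV'X eqxx !genmxE addsmxSl addsmx_sub sXW sV'W /=.
have -> : \rank (<<(V' + X)%MS>> :&: E)%MS = \rank ((V' + X) :&: E)%MS.
  by rewrite (cap_eqmx (genmxE _) (eqmx_refl E)).
have rV'XE : \rank (V' + X + E)%MS = \rank (E + X)%MS.
  apply/eqmx_rank/andP; split.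
    by rewrite !addsmx_sub addsmxSl addsmxSr (submx_trans sV'E) ?addsmxSl.
  by rewrite !addsmx_sub addsmxSr (submx_trans (addsmxSr V' X)) ?addsmxSl.
by have := mxrank_sum_cap (V' + X)%MS E; rewrite rV'XE rEX rV'X; lia.
Qed.

Let Q_gt1 : 1 < Q. Proof. by rewrite ltr1n card_finNzRing_gt1. Qed.
Let Q_neq0 : Q != 0. Proof. by rewrite gt_eqF // (lt_trans ltr01 Q_gt1). Qed.

Lemma free_count_neq0 d r : free_count (d + r) d r != 0.
Proof.
apply/prodf_neq0 => t _; rewrite subr_eq0 gt_eqF //.
by rewrite ltr_eXn2l // ltn_add2l.
Qed.

Lemma chain_submx (E : nat -> 'M[F]_n) k :
  (forall i, (i < k)%N -> (E i <= E i.+1)%MS) ->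
  forall i j, (i <= j <= k)%N -> (E i <= E j)%MS.
Proof.
move=> sE i j /andP [le_ij le_jk]; elim: j le_ij le_jk => [|j IH].
  by rewrite leqn0 => /eqP ->.
rewrite leq_eqVlt => /orP [/eqP -> //|lt_ij] lt_jk.
exact: submx_trans (IH lt_ij (ltnW lt_jk)) (sE j lt_jk).
Qed.

Lemma forall_rank_capP (E : nat -> 'M[F]_n) (d : nat -> nat) k (V : 'M[F]_n) :
  reflect (forall i, (i <= k)%N -> \rank (E i :&: V)%MS = d i)
    [forall i : 'I_k.+1, \rank (E i :&: V)%MS == d i].
Proof.
apply: (iffP forallP) => H i; last by apply/eqP; exact: H i (ltn_ord i).
by move=> le_ik; apply/eqP; exact: (H (Ordinal (le_ik : (i < k.+1)%N))).
Qed.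

Definition schubert_cell (E : nat -> 'M[F]_n) (d : nat -> nat) k :=
  [pred V : 'M[F]_n | [&& <<V>>%MS == V, (V <= E k)%MS &
      [forall i : 'I_k.+1, \rank (E i :&: V)%MS == d i]]].

Lemma schubert_cell_trunc (E : nat -> 'M[F]_n) (d : nat -> nat) k V :
  (forall i, (i < k.+1)%N -> (E i <= E i.+1)%MS) ->
  V \in schubert_cell E d k.+1 -> <<E k :&: V>>%MS \in schubert_cell E d k.
Proof.
move=> sE /and3P [_ _ /forall_rank_capP rV].
rewrite inE genmx_id eqxx genmxE capmxSl /=; apply/forall_rank_capP => i le_ik.
rewrite (cap_eqmx (eqmx_refl _) (genmxE _)) capmxA.
have sEik : (E i <= E k)%MS by apply: (chain_submx sE); rewrite le_ik leqnSn.
by rewrite (cap_eqmx (capmx_idPl sEik) (eqmx_refl V)) rV ?leqW.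
Qed.

Lemma schubert_cell_fibre (E : nat -> 'M[F]_n) (d : nat -> nat) k V' :
  (forall i, (i < k.+1)%N -> (E i <= E i.+1)%MS) -> (d k <= d k.+1)%N ->
  V' \in schubert_cell E d k ->
  [pred V | (V \in schubert_cell E d k.+1) && (<<E k :&: V>>%MS == V')] =i
  extensions V' (E k) (E k.+1) (d k.+1 - d k).
Proof.
move=> sE le_dk /and3P [/eqP cV' sV'E /forall_rank_capP rV'] V.
have rkV' : \rank V' = d k by rewrite -(rV' k (leqnn k)) (capmx_idPr sV'E).
have dkr : (d k + (d k.+1 - d k))%N = d k.+1 by rewrite subnKC.
rewrite !inE; apply/andP/and5P => [[/and3P [cV sVE /forall_rank_capP rV] /eqP defV'] |].
  have rkV : \rank V = d k.+1 by rewrite -(rV k.+1 (leqnn _)) (capmx_idPr sVE).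
  by rewrite cV rkV rkV' dkr -defV' genmxE capmxSr capmxC rV ?leqnSn.
move=> [cV /eqP rkV sV'V sVE /eqP rVE].
have sV'EV : (V' <= E k :&: V)%MS by rewrite sub_capmx sV'E.
have eV' : (V' == E k :&: V)%MS by rewrite -(mxrank_leqif_eq sV'EV).2 capmxC rVE.
split; last by rewrite -[X in _ == X]cV'; apply/eqP/eq_genmx/eqmx_sym/eqmxP.
rewrite cV sVE; apply/forall_rank_capP => i; rewrite leq_eqVlt => /orP [/eqP ->|lt_ik].
  by rewrite (capmx_idPr sVE) rkV rkV' dkr.
have sEik : (E i <= E k)%MS by apply: (chain_submx sE); rewrite -ltnS lt_ik leqnSn.
have /eqmxP eqV' := eV'.
rewrite -(rV' i lt_ik) (cap_eqmx (eqmx_refl _) eqV') capmxA.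
by rewrite (cap_eqmx (capmx_idPl sEik) (eqmx_refl V)).
Qed.

Lemma card_schubert_cell (E : nat -> 'M[F]_n) (d : nat -> nat) k :
  \rank (E 0) = 0%N -> d 0 = 0%N ->
  (forall i, (i < k)%N -> (E i <= E i.+1)%MS) ->
  (forall i, (i < k)%N -> (d i <= d i.+1)%N) ->
  #|schubert_cell E d k|%:R = \prod_(i < k)
     (free_count (\rank (E i.+1)) (\rank (E i)) (d i.+1 - d i) /
      free_count (d i.+1) (d i) (d i.+1 - d i)).
Proof.
move=> rE0 d0; elim: k => [|k IH] sE le_d.
  rewrite big_ord0 (@eq_card1 _ 0) // => V; rewrite inE.
  apply/idP/idP => [/and3P [/eqP cV sVE _]|].
    by rewrite inE -mxrank_eq0 -leqn0 -rE0 mxrankS.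
  move=> /eqP ->; rewrite genmx0 eqxx sub0mx.
  by apply/forall_rank_capP => i; rewrite leqn0 => /eqP ->; rewrite capmx0 mxrank0 d0.
have {}IH := IH (fun i lt_ik => sE i (ltnW lt_ik)) (fun i lt_ik => le_d i (ltnW lt_ik)).
rewrite big_ord_recr /= -IH -sum1_card.
rewrite (partition_big (fun V => <<(E k :&: V)%MS>>%MS) (schubert_cell E d k)) /=; last first.
  by move=> V; exact: schubert_cell_trunc.
set r := (d k.+1 - d k)%N; set c := free_count _ _ r / _.
rewrite natr_sum (eq_bigr (fun _ => c)) => [|V' V'_cell].
  by rewrite sumr_const mulr_natl.
have /and3P [_ sV'E /forall_rank_capP rV'] := V'_cell.
have rkV' : \rank V' = d k by rewrite -(rV' k (leqnn k)) (capmx_idPr sV'E).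
have dkr : (d k + r)%N = d k.+1 by rewrite subnKC ?le_d.
rewrite {}/c -(card_extensions r sV'E (sE k (ltnSn k)))
  rkV' dkr mulfK -?dkr ?free_count_neq0 //.
by rewrite sum1_card (eq_card (schubert_cell_fibre sE (le_d k (ltnSn k)) V'_cell)).
Qed.

Lemma free_count_shift e a r : free_count (e + a) e r = Q ^+ (e * r) * free_count a 0 r.
Proof.
have -> : Q ^+ (e * r) = \prod_(t < r) Q ^+ e by rewrite prodr_const card_ord exprM.
rewrite /free_count -big_split /=.
by apply: eq_bigr => t _; rewrite !exprD mulrBr.
Qed.

Lemma free_count_qpoch r m :
  free_count (r + m) 0 r * qpoch Q^-1 m = Q ^+ (r * (r + m)) * qpoch Q^-1 (r + m).
Proof.
elim: r => [|r IH]; first by rewrite /free_count big_ord0 mul1r.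
have -> : free_count (r.+1 + m) 0 r.+1 =
          (Q ^+ (r + m).+1 - 1) * (Q ^+ r * free_count (r + m) 0 r).
  have := free_count_shift 1 (r + m) r; rewrite mul1n => <-.
  rewrite /free_count big_ord_recl addSn.
  by congr (_ * _); apply: eq_bigr => t _; rewrite /bump leq0n.
rewrite -!mulrA IH /qpoch addSn [in RHS]big_nat_recr //= -/(qpoch _ _).
have -> : (r.+1 * (r + m).+1 = (r + m).+1 + r + r * (r + m))%N by ring.
rewrite !exprD exprVn; field; exact: expf_neq0.
Qed.

Let q_gt0 : 0 < Q^-1. Proof. by rewrite invr_gt0 (lt_trans ltr01 Q_gt1). Qed.
Let qfact_neq0 m : qfact Q^-1 m != 0. Proof. by rewrite gt_eqF ?qfact_gt0 ?ltW. Qed.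
Let subq_neq0 : 1 - Q^-1 != 0.
Proof. by rewrite subr_eq0 eq_sym invr_eq1 gt_eqF. Qed.
Let qpoch_neq0 m : qpoch Q^-1 m != 0.
Proof. by rewrite -qfact_qpoch mulf_neq0 ?expf_neq0. Qed.

Lemma free_count_ratio d c r m :
  free_count (d + c + (r + m)) (d + c) r / free_count (d + r) d r =
  Q ^+ (r * (c + m)) * (qfact Q^-1 (r + m) / (qfact Q^-1 r * qfact Q^-1 m)).
Proof.
have fc_rm : free_count (r + m) 0 r = Q ^+ (r * (r + m)) * qpoch Q^-1 (r + m) / qpoch Q^-1 m.
  by rewrite -free_count_qpoch mulfK.
have fc_r : free_count r 0 r = Q ^+ (r * r) * qpoch Q^-1 r.
  by have := free_count_qpoch r 0; rewrite !addn0 /qpoch big_geq // mulr1.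
rewrite !free_count_shift fc_rm fc_r -!qfact_qpoch.
rewrite (mulnDl d c r) (mulnDr r r m) (mulnDr r c m) (mulnC c r) !exprD.
by field; rewrite !expf_neq0 ?qfact_neq0.
Qed.

Definition relpos_count k l (alpha : 'I_k -> nat) (M : 'M[nat]_(k, l)) : rat :=
  Q ^+ relpos_exponent M * (\prod_(i < k) qfact Q^-1 (alpha i))
    / (\prod_(i < k) \prod_(j < l) qfact Q^-1 (M i j)).

Lemma relpos_count0 k (alpha : 'I_k -> nat) (M : 'M[nat]_(k, 0)) :
  (forall i, \sum_(j < 0) M i j = alpha i)%N -> relpos_count alpha M = 1.
Proof.
move=> rowM; rewrite /relpos_count /relpos_exponent.
rewrite big1 => [|i _]; last by apply: big1 => i' _; rewrite big_ord0.
rewrite big1 => [|i _]; last by rewrite -rowM big_ord0 /qfact big_geq.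
by rewrite big1 => [|i _]; rewrite ?big_ord0 ?expr0 ?mul1r ?invr1.
Qed.

Lemma relpos_count_recr k l (alpha : 'I_k -> nat) (M : 'M[nat]_(k, l.+1)) :
  (forall i, \sum_(j < l.+1) M i j = alpha i)%N ->
  let M' := dropcol M in let a' := rowsum M' in
  relpos_count alpha M = (\prod_(i < k)
      (free_count (psum alpha i.+1) (psum alpha i) (psum a' i.+1 - psum a' i) /
       free_count (psum a' i.+1) (psum a' i) (psum a' i.+1 - psum a' i)))
    * relpos_count a' M'.
Proof.
move=> rowM M' a'; set m := fun i => M i ord_max.
have alphaE i : alpha i = (a' i + m i)%N.
  by rewrite -rowM big_ord_recr /=; congr (_ + _)%N; apply: eq_bigr => j _; rewrite mxE.
have psum_alphaE x : psum alpha x = (psum a' x + psum m x)%N.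
  by rewrite /psum -big_split /=; apply: eq_bigr => i _; rewrite alphaE.
rewrite (eq_bigr (fun i => Q ^+ (a' i * psum m i.+1) *
    (qfact Q^-1 (alpha i) / (qfact Q^-1 (a' i) * qfact Q^-1 (m i))))); last first.
  move=> i _; rewrite !psum_alphaE !psumS addKn alphaE.
  have -> : (psum a' i + a' i + (psum m i + m i) = psum a' i + psum m i + (a' i + m i))%N.
    by ring.
  exact: free_count_ratio.
rewrite big_split /= prodrXr prodf_div big_split /= /relpos_count.
have -> : relpos_exponent M = (relpos_exponent M' + \sum_(i < k) a' i * psum m i.+1)%N.
  rewrite relpos_exponent_recr (eq_relpos_exponent (g := M')) => [|i j]; last by rewrite mxE.
  congr (_ + _)%N; apply: eq_bigr => i _; congr (_ * _)%N.
  by apply: eq_bigr => j _; rewrite mxE.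
have -> : \prod_(i < k) \prod_(j < l.+1) qfact Q^-1 (M i j) =
    (\prod_(i < k) \prod_(j < l) qfact Q^-1 (M' i j)) * \prod_(i < k) qfact Q^-1 (m i).
  rewrite -big_split /=; apply: eq_bigr => i _; rewrite big_ord_recr /=; congr (_ * _).
  by apply: eq_bigr => j _; rewrite mxE.
rewrite exprD; field.
by apply/and3P; split; do ?[apply/prodf_neq0 => ? _]; exact: qfact_neq0.
Qed.

End SubspaceCounting.

Section Flags.
Variables (F : finFieldType) (n : nat).

Lemma flagP l (beta : 'I_l -> nat) (Fl : {ffun 'I_l.+1 -> 'M[F]_n}) :
  reflect ((forall j, (j <= l)%N -> <<Fl (inord j)>>%MS = Fl (inord j) /\
                                   \rank (Fl (inord j)) = psum beta j) /\
           (forall j, (j < l)%N -> (Fl (inord j) <= Fl (inord j.+1))%MS))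
          (is_flag beta Fl).
Proof.
apply: (iffP andP) => [[/forallP H1 /forallP H2]|[H1 H2]]; split.
- move=> j le_jl; have /andP [/eqP h1 /eqP h2] := H1 (inord j).
  by rewrite inordK ?ltnS in h2.
- by move=> j lt_jl; exact: (H2 (Ordinal lt_jl)).
- apply/forallP => j; have [h1 h2] := H1 j (ltn_ord j).
  by rewrite inord_val in h1 h2; rewrite h1 h2 !eqxx.
- by apply/forallP => j; exact: H2 j (ltn_ord j).
Qed.

Definition corner_sum k l (M : 'M[nat]_(k, l)) (i j : nat) : nat :=
  (\sum_(i' < k | (i' < i)%N) \sum_(j' < l | (j' < j)%N) M i' j')%N.

Lemma relposP k l (E : 'I_k.+1 -> 'M[F]_n) (Fl : {ffun 'I_l.+1 -> 'M[F]_n})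
    (M : 'M[nat]_(k, l)) :
  reflect (forall i j, (i <= k)%N -> (j <= l)%N ->
             \rank (E (inord i) :&: Fl (inord j))%MS = corner_sum M i j)
          (has_relpos E Fl M).
Proof.
apply: (iffP forallP) => [H i j le_ik le_jl|H i].
  have /forallP /(_ (inord j)) /eqP := H (inord i).
  by rewrite /corner_sum !inordK ?ltnS.
apply/forallP => j; apply/eqP.
by have := H i j (ltn_ord i) (ltn_ord j); rewrite !inord_val.
Qed.

Lemma sum_ltn_widen l (f : 'I_l.+1 -> nat) j : (j <= l)%N ->
  (\sum_(j' < l.+1 | (j' < j)%N) f j' =
   \sum_(j' < l | (j' < j)%N) f (widen_ord (leqnSn l) j'))%N.
Proof.
by move=> le_jl; rewrite big_mkcond big_ord_recr /= ltnNge le_jl addn0 -big_mkcond.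
Qed.

Lemma sum_ltn_ord l (f : 'I_l -> nat) : (\sum_(j < l | (j < l)%N) f j = \sum_(j < l) f j)%N.
Proof. by apply: eq_bigl => j; rewrite ltn_ord. Qed.

Lemma corner_sum_row k l (M : 'M[nat]_(k, l)) (alpha : 'I_k -> nat) i :
  (forall i, \sum_(j < l) M i j = alpha i)%N -> corner_sum M i l = psum alpha i.
Proof. by move=> rowM; apply: eq_bigr => i' _; rewrite sum_ltn_ord rowM. Qed.

Lemma corner_sum_col k l (M : 'M[nat]_(k, l)) (beta : 'I_l -> nat) j :
  (forall j, \sum_(i < k) M i j = beta j)%N -> corner_sum M k j = psum beta j.
Proof.
by move=> colM; rewrite /corner_sum sum_ltn_ord exchange_big; apply: eq_bigr => j' _.
Qed.

Lemma corner_sum_dropcol k l (M : 'M[nat]_(k, l.+1)) i j : (j <= l)%N ->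
  corner_sum M i j = corner_sum (dropcol M) i j.
Proof.
move=> le_jl; apply: eq_bigr => i' _; rewrite sum_ltn_widen //.
by apply: eq_bigr => j' _; rewrite mxE.
Qed.

Lemma capmx_rank_sub (A B : 'M[F]_n) : \rank (A :&: B)%MS = \rank B -> (B <= A)%MS.
Proof.
move=> rAB; have := (mxrank_leqif_sup (capmxSr A B)).2; rewrite rAB eqxx => /esym sBAB.
exact: submx_trans sBAB (capmxSl A B).
Qed.

Lemma submx_rank_eqmx (A B : 'M[F]_n) : (A <= B)%MS -> \rank A = \rank B -> (A == B)%MS.
Proof. by move=> sAB rAB; rewrite -(mxrank_leqif_eq sAB).2 rAB. Qed.

Lemma genmx_fixed_eq (A B : 'M[F]_n) :
  <<A>>%MS = A -> <<B>>%MS = B -> (A == B)%MS -> A = B.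
Proof. by move=> cA cB /eqmxP/eq_genmx; rewrite cA cB. Qed.

Lemma mxrank_capmx_sub (A V B : 'M[F]_n) : (B <= V)%MS ->
  \rank (A :&: V :&: B)%MS = \rank (A :&: B)%MS.
Proof. by move=> /capmx_idPr sBV; rewrite -capmxA (cap_eqmx (eqmx_refl A) sBV). Qed.

Definition flag_trunc l (Fl : {ffun 'I_l.+2 -> 'M[F]_n}) : {ffun 'I_l.+1 -> 'M[F]_n} :=
  [ffun j => Fl (widen_ord (leqnSn _) j)].

Definition flag_ext l (top : 'M[F]_n) (G : {ffun 'I_l.+1 -> 'M[F]_n}) :
  {ffun 'I_l.+2 -> 'M[F]_n} := [ffun j => if j == ord_max then top else G (inord j)].

Lemma flag_truncE l Fl j : (j <= l)%N -> @flag_trunc l Fl (inord j) = Fl (inord j).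
Proof.
by move=> le_jl; rewrite ffunE; congr (Fl _); apply: val_inj; rewrite /= !inordK // ltnS leqW.
Qed.

Lemma flag_extE l top G j : (j <= l)%N -> @flag_ext l top G (inord j) = G (inord j).
Proof.
by move=> le_jl; rewrite ffunE -val_eqE /= inordK ?ltnS ?leqW // ltn_eqF ?ltnS.
Qed.

Lemma flag_ext_last l top G : @flag_ext l top G (inord l.+1) = top.
Proof. by rewrite ffunE -val_eqE /= inordK ?eqxx. Qed.

Lemma flag_extK l top : cancel (@flag_ext l top) (@flag_trunc l).
Proof.
move=> G; apply/ffunP => j; rewrite !ffunE -val_eqE /= ltn_eqF //.
by congr (G _); apply: val_inj; rewrite /= inordK.
Qed.

Section LastColumn.
Variables (k l : nat) (alpha : 'I_k -> nat) (beta : 'I_l.+1 -> nat).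
Variables (M : 'M[nat]_(k, l.+1)) (E : 'I_k.+1 -> 'M[F]_n) (V : 'M[F]_n).
Hypothesis rkE : forall i, \rank (E i) = psum alpha i.
Hypothesis sE : forall i : 'I_k, (E (inord i) <= E (inord i.+1))%MS.
Hypothesis rowM : forall i, (\sum_(j < l.+1) M i j)%N = alpha i.
Hypothesis colM : forall j, (\sum_(i < k) M i j)%N = beta j.
Hypothesis V_cell :
  V \in schubert_cell (fun x => E (inord x)) (psum (rowsum (dropcol M))) k.

Local Notation M' := (dropcol M).
Local Notation beta' := (fun j => beta (widen_ord (leqnSn l) j)).
Local Notation EV := (fun i => E i :&: V)%MS.
(* The last member of F' is forced: it lies in E ord_max and has its dimension. *)
Local Notation top := <<E ord_max>>%MS.
Local Notation Enat := (fun x : nat => E (inord x)).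
Local Notation flags_through :=
  [pred Fl | (is_flag beta Fl && has_relpos E Fl M) && (Fl (inord l) == V)].

Let sE_le i j : (i <= j <= k)%N -> (E (inord i) <= E (inord j))%MS.
Proof.
by apply: (@chain_submx F n Enat k) => i0 lt_i0k; exact: (sE (Ordinal lt_i0k)).
Qed.

Let E_last : E (inord k) = E ord_max.
Proof. by congr (E _); apply: val_inj; rewrite /= inordK. Qed.

Let rank_top : \rank top = psum beta l.+1.
Proof.
rewrite mxrank_gen -E_last rkE inordK // -(corner_sum_col _ colM) /corner_sum sum_ltn_ord.
by rewrite /psum sum_ltn_ord; apply: eq_bigr => i _; rewrite sum_ltn_ord rowM.
Qed.

Let rank_V : \rank V = corner_sum M k l.
Proof.
case/and3P: V_cell => _ /capmx_idPr sVE /(@forall_rank_capP F n Enat) rV.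
rewrite -sVE rV // corner_sum_dropcol //; apply: eq_bigr => i _.
by rewrite sum_ltn_ord.
Qed.

Lemma flag_trunc_relpos Fl : Fl \in flags_through ->
  is_flag beta' (flag_trunc Fl) && has_relpos EV (flag_trunc Fl) M'.
Proof.
case/andP=> /andP [/flagP [FlP sFl] /relposP relFl] /eqP FlV.
have sFl_le := chain_submx sFl.
apply/andP; split.
  apply/flagP; split => [j le_jl|j lt_jl]; rewrite !flag_truncE ?(ltnW lt_jl) //.
    by have [-> ->] := FlP j (leqW le_jl); rewrite /psum sum_ltn_widen.
  exact: sFl j (ltnW lt_jl).
apply/relposP => i j le_ik le_jl; rewrite flag_truncE // mxrank_capmx_sub.
  by rewrite relFl ?leqW ?corner_sum_dropcol.
by rewrite -FlV sFl_le ?le_jl ?leqW.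
Qed.

Let last_max : (inord l.+1 : 'I_l.+2) = ord_max.
Proof. by apply: val_inj; rewrite /= inordK. Qed.

Lemma flag_truncK Fl : Fl \in flags_through -> flag_ext top (flag_trunc Fl) = Fl.
Proof.
case/andP=> /andP [/flagP [FlP _] /relposP relFl] _.
apply/ffunP => j; rewrite ffunE; case: eqP => [->|/eqP j_ne_max].
  have [cFl rFl] := FlP l.+1 (leqnn _); rewrite last_max in cFl rFl.
  have sFlE : (Fl ord_max <= E ord_max)%MS.
    apply: capmx_rank_sub; rewrite rFl -E_last -last_max relFl //.
    exact: corner_sum_col.
  rewrite -cFl; apply/eq_genmx/eqmx_sym/eqmxP/submx_rank_eqmx => //.
  by rewrite rFl -rank_top mxrank_gen.
have le_jl : (j <= l)%N.
  move: (ltn_ord j) j_ne_max; rewrite ltnS leq_eqVlt => /orP [/eqP j_l|//].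
  by rewrite -val_eqE /= j_l eqxx.
by rewrite flag_truncE // inord_val.
Qed.

Lemma flag_ext_relpos G : is_flag beta' G && has_relpos EV G M' ->
  flag_ext top G \in flags_through.
Proof.
case/andP=> /flagP [GP sG] /relposP relG.
have sG_le := chain_submx sG.
have [cV sVE _] := and3P V_cell.
have rkG j : (j <= l)%N -> \rank (G (inord j)) = psum beta j.
  by move=> le_jl; have [_ ->] := GP j le_jl; rewrite /psum sum_ltn_widen.
have GlV : G (inord l) = V.
  have [cG _] := GP l (leqnn l).
  have rGl : \rank (G (inord l)) = corner_sum M k l by rewrite rkG // (corner_sum_col _ colM).
  have sGV : (G (inord l) <= V)%MS.
    apply: submx_trans (capmxSr (E (inord k)) V); apply: capmx_rank_sub.
    by rewrite relG // -corner_sum_dropcol.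
  by apply: genmx_fixed_eq => //; [exact/eqP | rewrite submx_rank_eqmx // rGl rank_V].
rewrite inE flag_extE // GlV eqxx andbT; apply/andP; split.
  apply/flagP; split => [j|j]; rewrite ?ltnS leq_eqVlt => /orP [/eqP ->|lt_jl].
  - by rewrite flag_ext_last genmx_id rank_top.
  - by rewrite flag_extE // (GP j lt_jl).1 rkG.
  - by rewrite flag_extE // flag_ext_last GlV genmxE -E_last.
  - by rewrite !flag_extE ?(ltnW lt_jl) //; exact: sG.
apply/relposP => i j le_ik; rewrite leq_eqVlt => /orP [/eqP ->|lt_jl].
  rewrite flag_ext_last (cap_eqmx (eqmx_refl _) (genmxE _)) (capmx_idPl _).
    by rewrite rkE inordK // (corner_sum_row _ rowM).
  by rewrite -E_last; apply: sE_le; rewrite le_ik leqnn.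
rewrite flag_extE // -(mxrank_capmx_sub _ (V := V)) ?relG ?corner_sum_dropcol //.
by rewrite -GlV; apply: sG_le; rewrite leqnn andbT.
Qed.

Lemma card_flags_through :
  #|flags_through| = #|[pred G | is_flag beta' G && has_relpos EV G M']|.
Proof.
rewrite -(card_in_imset (f := @flag_trunc l)) => [|Fl1 Fl2 Fl1P Fl2P eqFl]; last first.
  by rewrite -(flag_truncK Fl1P) -(flag_truncK Fl2P) eqFl.
apply: eq_card => G; apply/imsetP/idP => [[Fl /flag_trunc_relpos relFl ->] // | relG].
by exists (flag_ext top G); rewrite ?flag_extK ?flag_ext_relpos.
Qed.

Lemma flag_relpos_cell Fl : is_flag beta Fl && has_relpos E Fl M ->
  Fl (inord l) \in schubert_cell Enat (psum (rowsum M')) k.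
Proof.
case/andP=> /flagP [FlP _] /relposP relFl; have [cFl rFl] := FlP l (leqnSn l).
rewrite inE cFl eqxx /=; apply/andP; split.
  by apply: capmx_rank_sub; rewrite rFl relFl // (corner_sum_col _ colM).
apply/(@forall_rank_capP F n Enat) => i le_ik.
by rewrite relFl // corner_sum_dropcol // (corner_sum_row _ (fun=> erefl)).
Qed.

Lemma mxrank_cap_cell i : \rank (EV i) = psum (rowsum M') i.
Proof.
case/and3P: V_cell => _ _ /(@forall_rank_capP F n Enat) rV.
by rewrite -rV ?inord_val // -ltnS.
Qed.

Lemma cap_cell_chain (i : 'I_k) : (EV (inord i) <= EV (inord i.+1))%MS.
Proof. exact/capmxS/submx_refl/sE. Qed.

Lemma dropcol_colsum j : (\sum_(i < k) M' i j)%N = beta' j.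
Proof. by rewrite /= -colM; apply: eq_bigr => i _; rewrite mxE. Qed.

End LastColumn.

Lemma card_flags_relpos0 k (beta : 'I_0 -> nat) (M : 'M[nat]_(k, 0)) (E : 'I_k.+1 -> 'M[F]_n) :
  #|[pred Fl : {ffun 'I_1 -> 'M[F]_n} | is_flag beta Fl && has_relpos E Fl M]| = 1%N.
Proof.
apply: (@eq_card1 _ [ffun => 0]) => Fl; rewrite unfold_in /=; apply/idP/eqP.
  case/andP=> /flagP [FlP _] _; have [_ rFl0] := FlP 0%N (leqnn 0).
  move: rFl0; rewrite /psum big_ord0 => /eqP; rewrite mxrank_eq0 => /eqP Fl0.
  apply/ffunP => j; rewrite ffunE ord1 -Fl0; congr (Fl _).
  by apply: val_inj; rewrite /= inordK.
move=> ->; apply/andP; split.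
  apply/flagP; split=> // j; rewrite leqn0 => /eqP ->.
  by rewrite ffunE genmx0 mxrank0 /psum big_ord0.
apply/relposP => i j _ _; rewrite ffunE capmx0 mxrank0.
by apply/esym/big1 => i' _; rewrite big_ord0.
Qed.

Lemma card_flags_relpos k l (alpha : 'I_k -> nat) (beta : 'I_l -> nat)
    (M : 'M[nat]_(k, l)) (E : 'I_k.+1 -> 'M[F]_n) :
  (forall i, \rank (E i) = psum alpha i) ->
  (forall i : 'I_k, (E (inord i) <= E (inord i.+1))%MS) ->
  (forall i, \sum_(j < l) M i j = alpha i)%N ->
  (forall j, \sum_(i < k) M i j = beta j)%N ->
  #|[pred Fl | is_flag beta Fl && has_relpos E Fl M]|%:R = relpos_count F alpha M.
Proof.
elim: l => [|l IH] in beta alpha M E * => rkE sE rowM colM.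
  by rewrite card_flags_relpos0 relpos_count0.
set Enat := fun x : nat => E (inord x); set a' := rowsum (dropcol M).
rewrite -sum1_card (partition_big (fun Fl : {ffun 'I_l.+2 -> 'M[F]_n} => Fl (inord l))
  (schubert_cell Enat (psum a') k)) => [|Fl]; last exact: flag_relpos_cell.
rewrite natr_sum (eq_bigr (fun _ => relpos_count F a' (dropcol M))) => [|V V_cell].
  rewrite sumr_const -mulr_natl card_schubert_cell.
  - rewrite (relpos_count_recr F rowM) -/a'; congr (_ * _); apply: eq_bigr => i _.
    have lt_ik := ltn_ord i.
    by rewrite /Enat !rkE !inordK ?ltnS ?(ltnW lt_ik).
  - by rewrite /Enat rkE inordK // /psum big_pred0.
  - by rewrite /psum big_pred0.
  - by move=> i lt_ik; exact: (sE (Ordinal lt_ik)).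
  - by move=> i lt_ik; rewrite (psumS _ (Ordinal lt_ik)) leq_addr.
rewrite sum1_card (card_flags_through rkE sE rowM colM V_cell).
apply: IH => //.
- exact: mxrank_cap_cell V_cell.
- exact: cap_cell_chain.
- exact: dropcol_colsum colM.
Qed.
End Flags.

Lemma psum_le_sum k (a : 'I_k -> nat) x : (psum a x <= \sum_(i < k) a i)%N.
Proof. by rewrite [leqRHS](bigID (fun i : 'I_k => (i < x)%N)) leq_addr. Qed.

Lemma pid_mx_sub (F : fieldType) n r s :
  (r <= s)%N -> ((pid_mx r : 'M[F]_n) <= (pid_mx s : 'M[F]_n))%MS.
Proof.
move=> le_rs; apply/submxP; exists (pid_mx r).
by rewrite mul_pid_mx (minn_idPl le_rs) pid_mx_minv.
Qed.

Lemma rank_std_flag (F : finFieldType) k (alpha : 'I_k -> nat) (i : 'I_k.+1) :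
  \rank (std_flag F (\sum_(i < k) alpha i) alpha i) = psum alpha i.
Proof. by rewrite rank_pid_mx ?psum_le_sum. Qed.

Lemma std_flag_chain (F : finFieldType) n k (alpha : 'I_k -> nat) (i : 'I_k) :
  (std_flag F n alpha (inord i) <= std_flag F n alpha (inord i.+1))%MS.
Proof.
have lt_ik := ltn_ord i.
by apply: pid_mx_sub; rewrite !inordK ?ltnS ?(ltnW lt_ik) // (psumS alpha i) leq_addr.
Qed.

Theorem corollary4p29 (F : finFieldType) (n k l : nat)
  (alpha : 'I_k -> nat) (beta : 'I_l -> nat) (M : 'M[nat]_(k, l))
  (halpha : (\sum_(i < k) alpha i)%N = n)
  (hbeta : (\sum_(j < l) beta j)%N = n)
  (hrow : forall i : 'I_k, (\sum_(j < l) M i j)%N = alpha i)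
  (hcol : forall j : 'I_l, (\sum_(i < k) M i j)%N = beta j) :
  let Q : rat := #|F|%:R in
  let q : rat := Q^-1 in
  (#|[pred Fl : {ffun 'I_l.+1 -> 'M[F]_n} |
       is_flag beta Fl && has_relpos (std_flag F n alpha) Fl M]|)%:R
  = Q ^+ (\sum_(i < k) \sum_(i' < k | (i' <= i)%N)
            \sum_(j < l) \sum_(j' < l | (j < j')%N) M i j * M i' j')%N
    * (\prod_(i < k) qfact q (alpha i))
    / (\prod_(i < k) \prod_(j < l) qfact q (M i j)).
Proof.
move=> Q q; apply: card_flags_relpos hrow hcol => [i|]; last exact: std_flag_chain.
by rewrite -halpha rank_std_flag.
Qed.
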